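(* For every $y\in[0,1]$, the closure $\overline{R^{-1}(y)}$ of the fiber $R^{-1}(y)$ is a Cantor set of Lebesgue measure zero, and $\overline{R^{-1}(y)}\setminus R^{-1}(y)\subset\mathscr D$ (in particular this remainder is countable).
   Context: Define $\rho$ on binary words: for $b=b_1b_2\dots$, $\rho(b)$ is obtained by deleting every digit $b_n=0$ and replacing every $b_n=1$ by $0$ if $n$ is odd and by $1$ if $n$ is even. For $x\in(0,1]$ let $\beta(x)$ be the unique binary expansion of $x$ with infinitely many $1$'s. Define $R:[0,1]\to[0,1]$ by $R(0)=2/3$ and, for $x\in(0,1]$, $R(x)=\sum_{n\ge1}c_n2^{-n}$ where $c=\rho(\beta(x))$. $\mathscr D$ is the set of dyadic rationals in $[0,1]$. *)

From HB Require Import structures.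
From mathcomp Require Import all_boot all_order all_algebra.
From mathcomp Require Import all_classical all_reals.
From mathcomp Require Import topology normedtype sequences measure lebesgue_measure.
Set Implicit Arguments. Unset Strict Implicit. Unset Printing Implicit Defensive.
Import Order.TTheory GRing.Theory Num.Theory.
Import numFieldNormedType.Exports.
Local Open Scope classical_set_scope.
Local Open Scope ring_scope.

(* Binary words are infinite sequences [b : nat -> bool]; the digit
   b_n (n >= 1) is [b n]; the value [b 0] is ignored. *)

Definition is_binary_expansion {R : realType} (x : R) (b : nat -> bool) :=
  (fun N : nat => \sum_(1 <= n < N) ((b n)%:R / 2 ^+ n : R)) @ \oo --> x.

Definition infinitely_many_ones (b : nat -> bool) :=
  forall N : nat, exists n : nat, (N < n)%N /\ b n.

(* beta(x): the (unique, for x in (0,1]) binary expansion of x with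
   infinitely many 1's. *)
Definition beta {R : realType} (x : R) : nat -> bool :=
  get [set b | is_binary_expansion x b /\ infinitely_many_ones b].

Definition ones_upto (b : nat -> bool) (m : nat) : nat :=
  \sum_(1 <= k < m.+1) (b k : nat).

(* rho(b) for an infinite word b with infinitely many 1's:
   the 1 at position m of b (which is the (ones_upto b m)-th 1) becomes
   the (ones_upto b m)-th digit of rho(b), equal to 0 if m is odd and 1
   if m is even; zeros of b are deleted.  Digit c_n (n >= 1) is [rho b n]. *)
Definition rho (b : nat -> bool) (n : nat) : bool :=
  `[< exists m : nat, [/\ (1 <= m)%N, b m, ~~ odd m & ones_upto b m = n] >].

Definition Rmap {R : realType} (x : R) : R :=
  if x == 0 then 2 / 3
  else limn (fun N : nat => \sum_(1 <= n < N) ((rho (beta x) n)%:R / 2 ^+ n : R)).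

Definition fiber {R : realType} (y : R) : set R :=
  [set x | 0 <= x <= 1 /\ Rmap x = y].

Definition dyadic {R : realType} : set R :=
  [set x | 0 <= x <= 1 /\ exists k n : nat, x = k%:R / 2 ^+ n].

Definition cantor_set {T : topologicalType} (A : set T) :=
  [/\ A !=set0, compact A, perfect_set A & totally_disconnected A].

From HB Require Import structures.
From mathcomp Require Import all_boot all_order all_algebra.
From mathcomp Require Import all_classical all_reals.
From mathcomp Require Import topology normedtype sequences measure lebesgue_measure.
From mathcomp Require Import measurable_realfun lra ring zify.
Import Order.TTheory GRing.Theory Num.Theory.
Import numFieldNormedType.Exports.
Local Open Scope classical_set_scope.
Local Open Scope ring_scope.

Set Implicit Arguments.
Unset Strict Implicit.
Unset Printing Implicit Defensive.

(* Binary expansions are handled through "windows": [x] lies in the upper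
   window of level n of a word d when psum d n < x <= psum d n + 2^-n.  The
   words whose upper windows all contain x are exactly the words agreeing
   with [beta x] (from digit 1 on), and the same uniqueness holds for the
   half-open-on-the-right lower windows, which capture the expansions with
   finitely many 1's.  On the combinatorial side, digit j of [rho b] depends
   only on the first j 1's of b, any word c equals [rho (encode c)], and
   inserting two 0's into b ([pad]) does not change [rho b].

   The properties of F then follow:
   - nonempty: the value of [encode c], c an expansion of y, lies in the fiber;
   - perfect: padding the expansion of a fiber point x far out gives another
     fiber point [squeeze x N] as close to x as wanted (and near 0 the fiber
     contains the points x / 4^k);
   - measure zero: [rho (beta x)] is one of the two expansions of y, which
     leaves 3 of the 4 choices for each pair of digits of [beta x]; so the
     fiber, and hence its closure, is covered by 2 * 3^L intervals of length
     4^-L;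
   - totally disconnected: a null subset of R contains no segment;
   - F \ R^{-1}(y) is dyadic: at a non-dyadic point z of F, fiber points
     close to z share many digits with [beta z], so [Rmap z] is within any
     2^-K of y, i.e. z is in the fiber. *)

Lemma closure_sub_closed (T : topologicalType) (A B : set T) :
  closed B -> A `<=` B -> closure A `<=` B.
Proof. by move=> cB AB; rewrite closureE; apply: smallest_sub. Qed.

Lemma size_flatten_map_le (T U : Type) (f : T -> seq U) (k : nat) (s : seq T) :
  (forall t, size (f t) <= k)%N -> (size (flatten (map f s)) <= k * size s)%N.
Proof.
move=> fk; elim: s => [|t s IH] /=; first by rewrite muln0.
by rewrite size_cat mulnS leq_add.
Qed.

(* Digit 0 of a word is ignored everywhere: words are compared from digit 1. *)
Definition agree (d d' : nat -> bool) := forall k, (0 < k)%N -> d k = d' k.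
Definition agree_upto (n : nat) (d d' : nat -> bool) :=
  forall k, (0 < k <= n)%N -> d k = d' k.

Section Words.
Implicit Types (b c d : nat -> bool).

Lemma not_infinitely_many_ones d :
  ~ infinitely_many_ones d -> exists N, forall k, (N < k)%N -> d k = false.
Proof.
move=> H; apply: contrapT => H1; apply: H => N; apply: contrapT => H2; apply: H1.
by exists N => k Nk; apply/negbTE/negP => dk; apply: H2; exists k.
Qed.

Lemma ones_upto0 d : ones_upto d 0 = 0%N.
Proof. by rewrite /ones_upto big_geq. Qed.

Lemma ones_uptoS d m : ones_upto d m.+1 = (ones_upto d m + d m.+1)%N.
Proof. by rewrite /ones_upto big_nat_recr. Qed.

Lemma ones_upto_nondecr d m n : (m <= n)%N -> (ones_upto d m <= ones_upto d n)%N.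
Proof.
elim: n => [|n IH]; first by rewrite leqn0 => /eqP ->.
rewrite leq_eqVlt ltnS => /orP [/eqP -> //|/IH H].
by rewrite ones_uptoS; apply: (leq_trans H); rewrite leq_addr.
Qed.

Lemma ones_upto_jump d m n : (m < n)%N -> d n -> (ones_upto d m < ones_upto d n)%N.
Proof.
case: n => [//|n]; rewrite ltnS => mn dn.
by rewrite ones_uptoS dn addn1 ltnS ones_upto_nondecr.
Qed.

Lemma ones_upto_agree d d' n m : agree_upto n d d' -> (m <= n)%N ->
  ones_upto d m = ones_upto d' m.
Proof.
move=> H mn; apply: eq_big_nat => k /andP [k1 km].
by rewrite H // k1 (leq_trans _ mn) // -ltnS.
Qed.

Lemma ones_upto_unbounded d : infinitely_many_ones d ->
  forall K, exists n, (K <= ones_upto d n)%N.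
Proof.
move=> Hi; elim=> [|K [n Hn]]; first by exists 0%N.
have [m [nm dm]] := Hi n; exists m.
exact: leq_ltn_trans Hn (ones_upto_jump nm dm).
Qed.

Lemma rhoP d n :
  reflect (exists m, [/\ (0 < m)%N, d m, ~~ odd m & ones_upto d m = n]) (rho d n).
Proof. exact: asboolP. Qed.

Lemma rho_at d m : (0 < m)%N -> d m -> rho d (ones_upto d m) = ~~ odd m.
Proof.
move=> m1 dm; apply/rhoP; case: (boolP (odd m)) => om /=; last by exists m.
case=> m' [_ dm' om' E]; move: om'; suff -> : m' = m by rewrite om.
by case: (ltngtP m' m) => // H; [move: (ones_upto_jump H dm) | move: (ones_upto_jump H dm')];
   rewrite E ltnn.
Qed.

Lemma rho_transport d d' (f : nat -> nat) n :
  (forall m, (0 < m)%N -> d m -> ones_upto d m = n ->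
    [/\ (0 < f m)%N, d' (f m), odd (f m) = odd m & ones_upto d' (f m) = n]) ->
  rho d n -> rho d' n.
Proof.
move=> Hf /rhoP [m [m1 dm om E]]; have [fm1 dfm ofm Efm] := Hf m m1 dm E.
by apply/rhoP; exists (f m); rewrite ofm.
Qed.

Lemma rho_agree d d' : agree d d' -> rho d = rho d'.
Proof.
have half e e' : agree e e' -> forall n, rho e n -> rho e' n.
  move=> H n; apply: (rho_transport (f := id)) => m m1 dm <-.
  split=> //; first by rewrite -H.
  by apply: (ones_upto_agree (n := m)) => // k /andP [k1 _]; rewrite H.
move=> H; apply: funext => n; apply/idP/idP; apply: half => // k k1.
by rewrite H.
Qed.

Lemma rho_prefix d d' n k : agree_upto n d d' -> (k <= ones_upto d n)%N ->
  rho d k = rho d' k.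
Proof.
have half e e' : agree_upto n e e' -> (k <= ones_upto e n)%N -> rho e k -> rho e' k.
  move=> H kn; apply: (rho_transport (f := id)) => m m1 dm E.
  have mn : (m <= n)%N.
    by rewrite leqNgt; apply/negP => /ones_upto_jump /(_ dm); rewrite E ltnNge kn.
  by rewrite -H ?m1 // -(ones_upto_agree H mn).
move=> H kn; apply/idP/idP; first exact: half.
apply: half; first by move=> i Hi; rewrite H.
by rewrite -(ones_upto_agree H (leqnn n)).
Qed.

(* [encode c] realizes any word [c] as [rho] of a word with infinitely many
   1's: the pair of positions (2n+1, 2n+2) carries a single 1, placed at the
   even position iff c_{n+1} = 1. *)
Definition encode c (k : nat) : bool := if odd k then ~~ c (k.+1)./2 else c k./2.

Lemma encode_odd c n : encode c (n.*2).+1 = ~~ c n.+1.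
Proof. by rewrite /encode /= odd_double /= doubleK. Qed.

Lemma encode_even c n : encode c (n.+1).*2 = c n.+1.
Proof. by rewrite /encode odd_double doubleK. Qed.

Lemma ones_upto_encode c n : ones_upto (encode c) n.*2 = n.
Proof.
elim: n => [|n IH]; first by rewrite ones_upto0.
rewrite doubleS !ones_uptoS -doubleS encode_even encode_odd IH.
by case: (c n.+1); rewrite /= ?addn0 ?addn1.
Qed.

(* Every pair contains a 1, so [encode c] has infinitely many 1's. *)
Lemma encode_infinite c : infinitely_many_ones (encode c).
Proof.
move=> N; case E: (c N.+1).
  exists (N.+1).*2; split; last by rewrite encode_even.
  by rewrite doubleS ltnS leqW // -addnn leq_addr.
exists (N.*2).+1; split; last by rewrite encode_odd E.
by rewrite ltnS -addnn leq_addr.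
Qed.

(* Each 1 of [encode c] at an even position 2(n+1) reports c_{n+1} = 1, each
   at the odd position 2n+1 reports c_{n+1} = 0. *)
Lemma rho_encode c : agree (rho (encode c)) c.
Proof.
case=> [//|k] _; case E: (c k.+1).
  by rewrite -{1}(ones_upto_encode c k.+1) rho_at ?encode_even ?E // odd_double.
have H1 : encode c (k.*2).+1 by rewrite encode_odd E.
have := rho_at (isT : (0 < (k.*2).+1)%N) H1.
by rewrite ones_uptoS ones_upto_encode H1 addn1 /= odd_double.
Qed.

(* [pad b N] inserts two 0's into [b] after position N. *)
Definition pad b N (k : nat) : bool :=
  if (k <= N)%N then b k else if (k <= N.+2)%N then false else b (k - 2)%N.

Lemma pad_lo b N k : (k <= N)%N -> pad b N k = b k.
Proof. by rewrite /pad => ->. Qed.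

Lemma pad_gap b N : pad b N N.+1 = false /\ pad b N N.+2 = false.
Proof. by rewrite /pad; split; do 2?case: ifP => //; lia. Qed.

Lemma pad_hi b N k : (N < k)%N -> pad b N k.+2 = b k.
Proof. by rewrite /pad => Nk; rewrite !ifF ?subn2 //; apply/negbTE; rewrite -ltnNge; lia. Qed.

Lemma ones_upto_pad_lo b N m : (m <= N)%N -> ones_upto (pad b N) m = ones_upto b m.
Proof. by move=> mN; apply: ones_upto_agree mN => i /andP [_ iN]; rewrite pad_lo. Qed.

Lemma ones_upto_pad_hi b N k : (N <= k)%N -> ones_upto (pad b N) k.+2 = ones_upto b k.
Proof.
move=> /subnKC <-; elim: (k - N)%N => [|j IH].
  have [g1 g2] := pad_gap b N.
  by rewrite addn0 !ones_uptoS g1 g2 !addn0 ones_upto_pad_lo.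
by rewrite addnS ones_uptoS IH pad_hi ?ones_uptoS // ltnS leq_addr.
Qed.

(* Padding does not change [rho]: the 1's of [b] and [pad b N] correspond,
   with parity and count preserved. *)
Lemma rho_pad b N : rho (pad b N) = rho b.
Proof.
apply: funext => n; apply/idP/idP.
- apply: (rho_transport (f := fun m => if (m <= N)%N then m else m - 2)%N).
  move=> m m1 dm <-; case: (leqP m N) => [mN|Nm].
    by rewrite pad_lo // in dm; split=> //; rewrite ones_upto_pad_lo.
  case: (leqP m N.+2) => [m2|N2m].
    have [g1 g2] := pad_gap b N.
    have [mE|mE] : m = N.+1 \/ m = N.+2 by lia.
      by rewrite mE g1 in dm.
    by rewrite mE g2 in dm.
  have [k mE Nk] : exists2 k, m = k.+2 & (N < k)%N by exists (m - 2)%N; lia.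
  rewrite mE pad_hi // in dm; rewrite mE subn2 /=.
  by split; [lia | exact: dm | rewrite negbK | rewrite ones_upto_pad_hi // ltnW].
- apply: (rho_transport (f := fun m => if (m <= N)%N then m else m.+2)).
  move=> m m1 dm <-; case: (leqP m N) => [mN|Nm].
    by split=> //; rewrite ?pad_lo ?ones_upto_pad_lo.
  by split; rewrite ?pad_hi ?ones_upto_pad_hi ?(ltnW Nm) //= negbK.
Qed.

End Words.

Section Fibers.
Context {R : realType}.
Implicit Types (b c d : nat -> bool) (e p x y z : R).

Definition halfpow (n : nat) : R := (2 ^+ n)^-1.

Lemma halfpow_gt0 n : 0 < halfpow n.
Proof. by rewrite invr_gt0 exprn_gt0. Qed.

Lemma halfpow0 : halfpow 0 = 1.
Proof. by rewrite /halfpow expr0 invr1. Qed.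

Lemma halfpowS n : halfpow n.+1 = halfpow n / 2.
Proof. by rewrite /halfpow exprS invfM mulrC. Qed.

Lemma halfpow_nonincr m n : (m <= n)%N -> halfpow n <= halfpow m.
Proof.
move=> mn; rewrite lef_pV2 ?posrE ?exprn_gt0 //.
by rewrite ler_eXn2l // ltr1n.
Qed.

Lemma pow_small (q e : R) : 0 <= q < 1 -> 0 < e -> exists n, q ^+ n < e.
Proof.
move=> /andP [q0 q1] e0.
have q1' : `|q| < 1 by rewrite ger0_norm.
have [N _ HN] := cvgr0_norm_lt (fun n : nat => q ^+ n) (cvg_expr q1') e e0.
by exists N; have := HN N (leqnn N); rewrite /= ger0_norm // exprn_ge0.
Qed.

Lemma halfpow_small (e : R) : 0 < e -> exists n, halfpow n < e.
Proof.
move=> e0; have [|n Hn] := @pow_small 2^-1 e _ e0.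
  by rewrite invr_ge0 ler0n /= invf_lt1 ?ltr1n.
by exists n; rewrite /halfpow -exprVn.
Qed.

Lemma le_halfpow (a b : R) : (forall n, a <= b + halfpow n) -> a <= b.
Proof.
move=> H; apply/ler_addgt0Pr => e /halfpow_small [n Hn].
by apply: le_trans (H n) _; rewrite lerD2l ltW.
Qed.

Definition partial_sums d (N : nat) : R := \sum_(1 <= k < N) ((d k)%:R / 2 ^+ k).
Definition psum d (n : nat) : R := partial_sums d n.+1.
Definition value d : R := limn (partial_sums d).

Lemma psum0 d : psum d 0 = 0.
Proof. by rewrite /psum /partial_sums big_geq. Qed.

Lemma psumS d n : psum d n.+1 = psum d n + (d n.+1)%:R * halfpow n.+1.
Proof. by rewrite /psum /partial_sums big_nat_recr. Qed.

Lemma digit_bounds (b : bool) n : 0 <= b%:R * halfpow n <= halfpow n.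
Proof. by case: b; rewrite ?mul1r ?mul0r lexx ltW ?halfpow_gt0. Qed.

Lemma psum_nondecr d m n : (m <= n)%N -> psum d m <= psum d n.
Proof.
elim: n => [|n IH]; first by rewrite leqn0 => /eqP ->.
rewrite leq_eqVlt ltnS => /orP [/eqP -> //|/IH H].
rewrite psumS; apply: (le_trans H); rewrite lerDl.
by case/andP: (digit_bounds (d n.+1) n.+1).
Qed.

Lemma psum_ge0 d n : 0 <= psum d n.
Proof. by rewrite -(psum0 d) psum_nondecr. Qed.

Lemma psum_upper_nonincr d m n :
  (m <= n)%N -> psum d n + halfpow n <= psum d m + halfpow m.
Proof.
elim: n => [|n IH]; first by rewrite leqn0 => /eqP ->.
rewrite leq_eqVlt ltnS => /orP [/eqP -> //|/IH H].
apply: le_trans H; rewrite psumS -addrA lerD2l.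
have /andP [_ H] := digit_bounds (d n.+1) n.+1.
by rewrite halfpowS in H *; lra.
Qed.

Lemma psum_jump d n m : (n < m)%N -> d m -> psum d n + halfpow m <= psum d m.
Proof.
case: m => [//|m]; rewrite ltnS => nm dm.
by rewrite psumS dm mul1r lerD2r psum_nondecr.
Qed.

Lemma psum_agree d d' n : agree_upto n d d' -> psum d n = psum d' n.
Proof.
move=> H; apply: eq_big_nat => k /andP [k1 kn].
by rewrite H // k1 -ltnS.
Qed.

Lemma psum_dyadic d n : exists k : nat, psum d n = k%:R * halfpow n.
Proof.
elim: n => [|n [k Hk]]; first by exists 0%N; rewrite psum0 mul0r.
exists (k.*2 + d n.+1)%N; rewrite psumS Hk.
have -> : halfpow n = 2 * halfpow n.+1 by rewrite halfpowS; field.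
by rewrite natrD -muln2 natrM; ring.
Qed.

Lemma partial_sums_cvg d : cvgn (partial_sums d).
Proof.
have psE N : partial_sums d N = psum d N.-1.
  by case: N => [|N] //; rewrite /psum /partial_sums !big_geq.
apply: nondecreasing_is_cvgn.
  by move=> m n mn; rewrite !psE psum_nondecr // -!subn1 leq_sub2r.
exists 1 => _ [N _ <-]; rewrite psE.
have := psum_upper_nonincr d (leq0n N.-1).
rewrite psum0 halfpow0 add0r; have := halfpow_gt0 N.-1; lra.
Qed.

Lemma is_binary_expansionE x d : is_binary_expansion x d <-> value d = x.
Proof.
split; first by move=> H; apply: cvg_lim.
by move=> <-; apply: partial_sums_cvg.
Qed.

Lemma value_bounds d n : psum d n <= value d <= psum d n + halfpow n.
Proof.
apply/andP; split.
  apply: limr_ge; first exact: partial_sums_cvg.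
  by exists n.+1 => // -[|N] //= HN; apply: psum_nondecr.
apply: limr_le; first exact: partial_sums_cvg.
exists n.+1 => // -[|N] //= HN.
change (psum d N <= psum d n + halfpow n).
have := psum_upper_nonincr d (HN : (n <= N)%N); have := halfpow_gt0 N; lra.
Qed.

Lemma value_agree d d' : agree d d' -> value d = value d'.
Proof.
move=> H; rewrite /value; suff -> : partial_sums d = partial_sums d' by [].
by apply: funext => N; apply: eq_big_nat => k /andP [k1 _]; rewrite H.
Qed.

Lemma value_close d d' K : agree_upto K d d' -> value d <= value d' + halfpow K.
Proof.
move=> H; have /andP [_ H1] := value_bounds d K.
have /andP [H2 _] := value_bounds d' K.
by rewrite (psum_agree H) in H1; lra.
Qed.

Lemma value_finite d N : (forall k, (N < k)%N -> d k = false) ->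
  value d = psum d N /\ forall m, (N <= m)%N -> psum d m = psum d N.
Proof.
move=> HN.
have HS m : (N <= m)%N -> psum d m = psum d N.
  elim: m => [|m IH]; first by rewrite leqn0 => /eqP ->.
  rewrite leq_eqVlt ltnS => /orP [/eqP <- //| Nm].
  by rewrite psumS HN ?ltnS // mul0r addr0 IH.
split => //; apply/eqP; rewrite eq_le; apply/andP; split; last first.
  by have /andP [] := value_bounds d N.
apply: le_halfpow => n; have /andP [_ H] := value_bounds d (maxn n N).
rewrite HS ?leq_maxr // in H; apply: (le_trans H).
by rewrite lerD2l halfpow_nonincr // leq_maxl.
Qed.

(* [x] lies in the level-n dyadic interval of [d], half-open on the left
   (upper windows, [l = true]) or on the right (lower windows). *)
Definition window (l : bool) x d n :=
  if l then psum d n < x <= psum d n + halfpow n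
  else psum d n <= x < psum d n + halfpow n.

Definition in_windows (l : bool) x d := forall n, window l x d n.

Lemma infinite_upper_windows d : infinitely_many_ones d -> in_windows true (value d) d.
Proof.
move=> Hi n; rewrite /window; have /andP [_ ->] := value_bounds d n; rewrite andbT.
have [m [nm dm]] := Hi n; have /andP [H _] := value_bounds d m.
by have := psum_jump nm dm; have := halfpow_gt0 m; lra.
Qed.

Lemma finite_lower_windows d : ~ infinitely_many_ones d -> in_windows false (value d) d.
Proof.
move=> /not_infinitely_many_ones [N /value_finite [-> HS]] n; rewrite /window.
have [Nn|nN] := leqP N n; first by rewrite HS // lexx ltrDl halfpow_gt0.
have := psum_upper_nonincr d (ltnW nN); have := halfpow_gt0 N.
by rewrite psum_nondecr 1?ltnW //=; lra.
Qed.

Lemma windows_value l x d : in_windows l x d -> value d = x.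
Proof.
move=> Hw; apply/eqP; rewrite eq_le; apply/andP; split; apply: le_halfpow => n;
  have /andP [H1 H2] := value_bounds d n; move: (Hw n); rewrite /window;
  case: (l) => /andP [H3 H4]; lra.
Qed.

Lemma upper_windows_infinite x d : in_windows true x d -> infinitely_many_ones d.
Proof.
move=> Hw; apply: contrapT => /not_infinitely_many_ones [N /value_finite [vN _]].
by have := Hw N; rewrite /window -(windows_value Hw) vN; lra.
Qed.

Lemma window_digit_unique l x d d' n : window l x d n.+1 -> window l x d' n.+1 ->
  psum d n = psum d' n -> d n.+1 = d' n.+1.
Proof.
move=> + + E; rewrite /window !psumS E halfpowS.
by case: l; case: (d n.+1); case: (d' n.+1); rewrite /= ?mul1r ?mul0r ?addr0; lra.
Qed.

Lemma window_prefix_unique l x d d' n :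
  (forall k, (k <= n)%N -> window l x d k) ->
  (forall k, (k <= n)%N -> window l x d' k) -> agree_upto n d d'.
Proof.
elim: n => [|n IH] H1 H2 k; first by case: k.
have IH' := IH (fun k kn => H1 k (leqW kn)) (fun k kn => H2 k (leqW kn)).
case/andP => k1; rewrite leq_eqVlt ltnS => /orP [/eqP ->|kn]; last by apply: IH'; rewrite k1.
by apply: window_digit_unique (H1 _ (leqnn _)) (H2 _ (leqnn _)) (psum_agree IH').
Qed.

Lemma windows_unique l x d d' : in_windows l x d -> in_windows l x d' -> agree d d'.
Proof.
move=> H1 H2 k k1; apply: (window_prefix_unique (n := k)) => [i _|i _|].
- exact: H1.
- exact: H2.
- by rewrite k1 leqnn.
Qed.

Fixpoint greedy_psum x (n : nat) : R :=
  if n is n'.+1 then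
    (if greedy_psum x n' + halfpow n < x then greedy_psum x n' + halfpow n
     else greedy_psum x n')
  else 0.

Definition greedy x (n : nat) : bool :=
  if n is n'.+1 then greedy_psum x n' + halfpow n < x else false.

Lemma greedy_upper_windows x : 0 < x <= 1 -> in_windows true x (greedy x).
Proof.
move=> /andP [x0 x1] n; rewrite /window.
have -> : psum (greedy x) n = greedy_psum x n.
  elim: n => [|n IH]; first exact: psum0.
  by rewrite psumS IH /=; case: ifP; rewrite ?mul1r ?mul0r ?addr0.
elim: n => [|n IH]; first by rewrite /= halfpow0 add0r x0 x1.
by rewrite /=; case: ifPn; rewrite ?halfpowS -?leNgt; lra.
Qed.

(* For x in (0,1], the greedy expansion shows that [beta x] is well defined,
   so [beta x] is a (hence the) word whose upper windows contain x. *)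
Lemma beta_upper_windows x : 0 < x <= 1 -> in_windows true x (beta x).
Proof.
move=> Hx; have Hg := greedy_upper_windows Hx.
have Hex : exists b, is_binary_expansion x b /\ infinitely_many_ones b.
  exists (greedy x); split; last exact: upper_windows_infinite Hg.
  exact/is_binary_expansionE/(windows_value Hg).
have [/is_binary_expansionE vx Hi] := getPex Hex.
by rewrite -[in X in in_windows _ X]vx; apply: infinite_upper_windows.
Qed.

Lemma beta_agree x d : 0 < x <= 1 -> in_windows true x d -> agree (beta x) d.
Proof. by move=> /beta_upper_windows; apply: windows_unique. Qed.

Lemma upper_windows_unit x d : in_windows true x d -> 0 < x <= 1.
Proof. by move=> /(_ 0%N); rewrite /window psum0 halfpow0 add0r. Qed.

Lemma Rmap_value x : x != 0 -> Rmap x = value (rho (beta x)).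
Proof. by move=> x0; rewrite /Rmap (negbTE x0). Qed.

Lemma Rmap_windows x d : in_windows true x d -> Rmap x = value (rho d).
Proof.
move=> Hw; have /andP [x0 x1] := upper_windows_unit Hw.
by rewrite Rmap_value ?gt_eqF // (rho_agree (beta_agree (upper_windows_unit Hw) Hw)).
Qed.

Lemma value_exists y : 0 <= y <= 1 -> exists c, value c = y.
Proof.
move=> /andP [y0 y1]; have [->|yn0] := eqVneq y 0.
  exists (fun=> false); have [-> _] := @value_finite (fun=> false) 0%N (fun _ _ => erefl).
  exact: psum0.
have Hy : 0 < y <= 1 by rewrite lt_def yn0 y0 y1.
by exists (beta y); apply: windows_value (beta_upper_windows Hy).
Qed.

(* Every fiber over [0,1] contains a positive point: the value of
   [encode c], where c is an expansion of y. *)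
Lemma fiber_pos y : 0 <= y <= 1 -> exists x, fiber y x /\ 0 < x.
Proof.
move=> /value_exists [c vc].
have Hw := infinite_upper_windows (encode_infinite c).
have /andP [x0 x1] := upper_windows_unit Hw.
exists (value (encode c)); split => //; split; first by rewrite ltW.
by rewrite (Rmap_windows Hw) -vc; apply: value_agree; apply: rho_encode.
Qed.

Lemma psum_pad_lo b N n : (n <= N)%N -> psum (pad b N) n = psum b n.
Proof.
by move=> nN; apply: psum_agree => k /andP [_ kn]; rewrite pad_lo // (leq_trans kn nN).
Qed.

Lemma psum_pad_hi b N k : (N <= k)%N ->
  psum (pad b N) k.+2 = psum b N + (psum b k - psum b N) / 4.
Proof.
move=> /subnKC <-; elim: (k - N)%N => [|j IH].
  have [g1 g2] := pad_gap b N.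
  by rewrite addn0 !psumS g1 g2 psum_pad_lo // subrr mul0r !mul0r !addr0.
rewrite addnS psumS IH pad_hi ?ltnS ?leq_addr // psumS !halfpowS.
lra.
Qed.

Lemma pad_upper_windows b N x : in_windows true x b ->
  in_windows true (psum b N + (x - psum b N) / 4) (pad b N).
Proof.
move=> Hw n; rewrite /window; have /andP [a1 a2] := Hw N.
have [nN|Nn] := leqP n N.
  rewrite psum_pad_lo //; have /andP [c1 c2] := Hw n.
  by have := psum_nondecr b nN; lra.
have [->|N1n] : n = N.+1 \/ (N.+1 < n)%N by lia.
  by rewrite psumS psum_pad_lo // (pad_gap b N).1 mul0r addr0 halfpowS; lra.
have [k -> Nk] : exists2 k, n = k.+2 & (N <= k)%N by exists (n - 2)%N; lia.
rewrite psum_pad_hi //; have /andP [c1 c2] := Hw k.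
by rewrite !halfpowS; lra.
Qed.

(* The point obtained by inserting two 0's into the expansion of x after
   position N: it has the same image under [Rmap] and lies just below x. *)
Definition squeeze x N := psum (beta x) N + (x - psum (beta x) N) / 4.

Lemma squeeze_upper_windows x N : 0 < x <= 1 -> in_windows true (squeeze x N) (pad (beta x) N).
Proof. by move=> /beta_upper_windows; apply: pad_upper_windows. Qed.

(* Squeezing preserves [Rmap], since [rho] ignores the inserted 0's. *)
Lemma Rmap_squeeze x N : 0 < x <= 1 -> Rmap (squeeze x N) = Rmap x.
Proof.
move=> Hx; rewrite (Rmap_windows (squeeze_upper_windows N Hx)) rho_pad.
by rewrite (Rmap_windows (beta_upper_windows Hx)).
Qed.

Lemma squeeze_bounds x N : 0 < x <= 1 ->
  [/\ 0 < squeeze x N, squeeze x N < x & x - squeeze x N < halfpow N].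
Proof.
move=> Hx; have /andP [s0 _] := upper_windows_unit (squeeze_upper_windows N Hx).
have /andP [a1 a2] := beta_upper_windows Hx N; have := halfpow_gt0 N.
by rewrite /squeeze in s0 *; split; lra.
Qed.

Lemma squeeze0 x : squeeze x 0 = x / 4.
Proof. by rewrite /squeeze psum0 add0r subr0. Qed.

Lemma fiber_squeeze y x N : fiber y x -> 0 < x -> fiber y (squeeze x N).
Proof.
move=> [/andP [_ x1] Rx] x0; have Hx : 0 < x <= 1 by rewrite x0 x1.
have [s0 sx _] := squeeze_bounds N Hx.
by split; [rewrite !ltW // (lt_le_trans sx x1) | rewrite Rmap_squeeze].
Qed.

(* Repeated squeezing gives fiber points arbitrarily close to 0. *)
Lemma fiber_near0 y e : 0 <= y <= 1 -> 0 < e -> exists p, fiber y p /\ 0 < p < e.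
Proof.
move=> /fiber_pos [x [fx x0]] e0; have [/andP [_ x1] _] := fx.
have pos k : 0 < x * 4^-1 ^+ k by rewrite mulr_gt0 // exprn_gt0 // invr_gt0.
have Hk k : fiber y (x * 4^-1 ^+ k).
  elim: k => [|k IH]; first by rewrite expr0 mulr1.
  by rewrite exprSr mulrA -squeeze0; apply: fiber_squeeze IH (pos k).
have [|n Hn] := @pow_small 4^-1 e _ e0.
  by rewrite invr_ge0 ler0n /= invf_lt1 ?ltr1n.
exists (x * 4^-1 ^+ n); split; first exact: Hk.
rewrite pos /=.
by apply: le_lt_trans Hn; rewrite ler_piMl // exprn_ge0 // invr_ge0.
Qed.

Lemma fiber_pair_near y x e : 0 <= y <= 1 -> fiber y x -> 0 < e ->
  exists x1 x2, [/\ fiber y x1, fiber y x2, x1 != x2, `|x - x1| < e & `|x - x2| < e].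
Proof.
move=> y01 fx e0; have [->|xn0] := eqVneq x 0.
  have [p [fp /andP [p0 pe]]] := fiber_near0 y01 e0.
  have fq := fiber_squeeze 0 fp p0; rewrite squeeze0 in fq.
  have qp : p / 4 < p by lra.
  exists p, (p / 4); rewrite !sub0r !normrN !gtr0_norm ?divr_gt0 //.
  by split; [exact: fp | exact: fq | rewrite (gt_eqF qp) | exact: pe | lra].
have [/andP [x0 x1] _] := fx; have xp : 0 < x by rewrite lt_def xn0 x0.
have Hx : 0 < x <= 1 by rewrite xp x1.
have [N HN] := halfpow_small e0; have [s0 sx sN] := squeeze_bounds N Hx.
have d0 : 0 < x - squeeze x N by rewrite subr_gt0.
exists x, (squeeze x N); rewrite subrr normr0 (gtr0_norm d0).
by split; [exact: fx | exact: fiber_squeeze N fx xp | rewrite (gt_eqF sx) | exact: e0 | lra].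
Qed.

Lemma closure_near (A : set R) z e : closure A z -> 0 < e -> exists x, A x /\ `|z - x| < e.
Proof.
move=> Az e0; have [x [Ax zx]] := Az _ (nbhsx_ballx z e e0).
by exists x; split => //; move: zx; rewrite -ball_normE.
Qed.

Lemma closure_fiber_unit y z : closure (fiber y) z -> 0 <= z <= 1.
Proof.
have unit_closed : closed (`[0, 1]%classic : set R) by apply: itv_closed.
move=> /(closure_sub_closed unit_closed); rewrite /= in_itv; apply.
by move=> x [x01 _]; rewrite /= in_itv.
Qed.

(* Two-sided bound on a distance (stated separately so that [lra] never has
   to look inside the values of words). *)
Lemma ler_dist_both (a b e : R) : a <= b + e -> b <= a + e -> `|a - b| <= e.
Proof. by move=> ab ba; rewrite ler_distl; apply/andP; split; lra. Qed.

Lemma upper_window_nested x d k n : (k <= n)%N -> window true x d n -> window true x d k.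
Proof.
move=> kn /andP [w1 w2]; have := psum_nondecr d kn; have := psum_upper_nonincr d kn.
by rewrite /window; lra.
Qed.

Lemma Rmap_close y z x n : 0 < z <= 1 -> fiber y x -> window true x (beta z) n ->
  `|Rmap z - y| <= halfpow (ones_upto (beta z) n).
Proof.
move=> Hz [/andP [_ x1] Rx] Hwin.
have x0 : 0 < x by case/andP: Hwin => + _; apply: le_lt_trans (psum_ge0 _ _).
have Hx : 0 < x <= 1 by rewrite x0 x1.
have agr : agree_upto n (beta z) (beta x).
  apply: window_prefix_unique => [k kn|k _]; first exact: upper_window_nested Hwin.
  exact: beta_upper_windows.
set K := ones_upto (beta z) n.
have ragr : agree_upto K (rho (beta z)) (rho (beta x)).
  by move=> i /andP [_ iK]; apply: rho_prefix agr iK.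
have e1 := value_close ragr.
have e2 : value (rho (beta x)) <= value (rho (beta z)) + halfpow K.
  by apply: value_close => i Hi; rewrite ragr.
have /andP [z0 _] := Hz.
rewrite -Rx (Rmap_value (lt0r_neq0 z0)) (Rmap_value (lt0r_neq0 x0)).
exact: ler_dist_both e1 e2.
Qed.

(* 0 is dyadic, so a non-dyadic point of the closure is positive. *)
Lemma dyadic0 : @dyadic R 0.
Proof. by split; [rewrite lexx ler01 | exists 0%N, 0%N; rewrite mul0r]. Qed.

Lemma closure_nondyadic y z : closure (fiber y) z -> ~ dyadic z -> fiber y z.
Proof.
move=> cz ndz; have /andP [z0 z1] := closure_fiber_unit cz.
have zn0 : z != 0 by apply: contra_notN ndz => /eqP ->; exact: dyadic0.
have Hz : 0 < z <= 1 by rewrite lt_def zn0 z0 z1.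
have Hw := beta_upper_windows Hz; have Hinf := upper_windows_infinite Hw.
have below n : z < psum (beta z) n + halfpow n.
  have /andP [_ h] := Hw n; rewrite lt_def h andbT.
  apply/negP => /eqP zE; apply: ndz; split; first by rewrite z0 z1.
  have [k Hk] := psum_dyadic (beta z) n; exists k.+1, n.
  by rewrite -zE Hk -[k.+1]addn1 natrD mulrDl mul1r.
have close n : `|Rmap z - y| <= halfpow (ones_upto (beta z) n).
  have /andP [h1 _] := Hw n.
  have e0 : 0 < Num.min (z - psum (beta z) n) (psum (beta z) n + halfpow n - z).
    by rewrite lt_min !subr_gt0 h1 below.
  have [x [fx zx]] := closure_near cz e0.
  apply: (Rmap_close Hz fx); move: zx; rewrite lt_min => /andP [].
  by rewrite !ltr_norml => /andP [a1 a2] /andP [a3 a4]; apply/andP; split; lra.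
split; first by rewrite z0 z1.
apply/eqP; rewrite -subr_eq0 -normr_le0; apply: le_halfpow => K.
have [n Kn] := ones_upto_unbounded Hinf K.
by rewrite add0r; apply: le_trans (close n) (halfpow_nonincr Kn).
Qed.

(* The two expansions of y: with infinitely many 1's (upper windows) and with
   finitely many 1's (lower windows).  Every expansion of y is one of them. *)
Definition upper_word y : nat -> bool := get (in_windows true y).
Definition lower_word y : nat -> bool := get (in_windows false y).

Lemma value_word_cases c y : value c = y ->
  agree c (upper_word y) \/ agree c (lower_word y).
Proof.
move=> <-; have [Hi|Hf] := pselect (infinitely_many_ones c).
  left; have Hw := infinite_upper_windows Hi.
  by apply: windows_unique Hw (getPex (ex_intro _ c Hw)).
right; have Hw := finite_lower_windows Hf.
by apply: windows_unique Hw (getPex (ex_intro _ c Hw)).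
Qed.

(* Level-L cells for a target word c: a list containing the pairs
   (psum b 2L, ones_upto b 2L) of all words b with [rho b] agreeing with c
   ([cells_cover]).  A pair of digits (b_{2L+1}, b_{2L+2}) = (1,0) forces the
   next digit of c to be 0 and (0,1) forces it to be 1, so each cell has at
   most 3 children. *)
Definition children c (L : nat) (p : R * nat) : seq (R * nat) :=
  p :: (if c p.2.+1 then [:: (p.1 + halfpow (L.*2).+2, p.2.+1)]
        else (p.1 + halfpow (L.*2).+1, p.2.+1) ::
             (if c p.2.+2 then [:: (p.1 + halfpow (L.*2).+1 + halfpow (L.*2).+2, p.2.+2)]
              else [::])).

Fixpoint cells c (L : nat) : seq (R * nat) :=
  if L is L'.+1 then flatten [seq children c L' q | q <- cells c L'] else [:: (0, 0%N)].

Lemma size_cells c L : (size (cells c L) <= 3 ^ L)%N.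
Proof.
elim: L => [//|L IH] /=; rewrite expnS.
have three q : (size (children c L q) <= 3)%N.
  by rewrite /children; case: (c _); case: (c _).
by apply: leq_trans (size_flatten_map_le _ three) _; rewrite leq_mul2l IH orbT.
Qed.

Lemma zero_in_cells c L : (0, 0%N) \in cells c L.
Proof.
elim: L => [|L IH]; first exact: mem_head.
by apply/flatten_mapP; exists (0, 0%N) => //; apply: mem_head.
Qed.

Lemma cells_cover c x : 0 < x <= 1 -> agree (rho (beta x)) c ->
  forall L, (psum (beta x) L.*2, ones_upto (beta x) L.*2) \in cells c L.
Proof.
move=> Hx Hc; set d := beta x.
have cd m : (0 < m)%N -> d m -> c (ones_upto d m) = ~~ odd m.
  move=> m0 dm; rewrite -Hc ?rho_at //.
  by case: m m0 dm => [//|m] _ dm; rewrite ones_uptoS dm addn1.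
elim=> [|L IH]; first by rewrite /= psum0 ones_upto0 mem_head.
apply/flatten_mapP; exists (psum d L.*2, ones_upto d L.*2) => //.
rewrite doubleS !psumS !ones_uptoS /children /=.
set a := psum d L.*2; set j := ones_upto d L.*2.
have c1 : d (L.*2).+1 -> c j.+1 = false.
  by move=> h; have := cd _ (ltn0Sn _) h; rewrite ones_uptoS h addn1 /= odd_double.
have c2 : d (L.*2).+2 -> c (j + d (L.*2).+1).+1 = true.
  by move=> h; have := cd _ (ltn0Sn _) h; rewrite !ones_uptoS h -/j addn1 /= odd_double.
case E1: (d (L.*2).+1); case E2: (d (L.*2).+2);
  rewrite /= ?mul1r ?mul0r ?addr0 ?addn0 ?addn1 ?inE ?eqxx //.
- by move: (c2 E2); rewrite E1 addn1 (c1 E1) => -> /=; rewrite !inE eqxx !orbT.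
- by rewrite (c1 E1) /= !inE eqxx !orbT.
- by move: (c2 E2); rewrite E1 addn0 => -> /=; rewrite !inE eqxx !orbT.
Qed.

Fixpoint union_intervals (s : seq R) r : set R :=
  if s is a :: s' then `[a, a + r]%classic `|` union_intervals s' r else set0.

Lemma union_intervals_mem s r a x : a \in s -> a <= x <= a + r -> union_intervals s r x.
Proof.
elim: s => [//|b s IH]; rewrite inE => /orP [/eqP <-|as_] ax /=.
  by left; rewrite /= in_itv.
by right; apply: IH.
Qed.

Lemma union_intervals_closed s r : closed (union_intervals s r).
Proof.
by elim: s => [|a s IH] /=; [exact: closed0 | apply: closedU => //; exact: itv_closed].
Qed.

Lemma union_intervals_measure s r : 0 <= r ->
  (lebesgue_measure (union_intervals s r) <= ((size s)%:R * r)%:E)%E.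
Proof.
move=> r0; elim: s => [|a s IH] /=; first by rewrite measure0 mul0r.
have mU : measurable (union_intervals s r).
  by apply: closed_measurable; apply: union_intervals_closed.
apply: le_trans (measureU2 _ _ _) _; [exact: measurable_itv | exact: mU |].
rewrite -addn1 natrD mulrDl mul1r addrC EFinD leeD //.
change (lebesgue_measure ([set` `[a, a + r]%R] : set R) <= r%:E)%E.
by rewrite lebesgue_measure_itv /=; case: ifP; rewrite lee_fin // addrC addKr.
Qed.

(* The fiber is covered by the level-L cells of the two expansions of y:
   at most 2 * 3^L intervals of length 4^-L. *)
Definition fiber_cover y L : set R :=
  union_intervals [seq q.1 | q <- cells (upper_word y) L ++ cells (lower_word y) L]
                  (halfpow L.*2).

(* A positive fiber point lies in the interval of its cell; 0 lies in the
   interval of the cell (0, 0). *)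
Lemma fiber_sub_cover y L : fiber y `<=` fiber_cover y L.
Proof.
move=> x [/andP [x0 x1] Rx]; have hL := halfpow_gt0 L.*2.
have [->|xn0] := eqVneq x 0.
  apply: (union_intervals_mem (a := 0)); last by rewrite lexx addrC lerDr ltW.
  by apply/mapP; exists (0, 0%N); rewrite // mem_cat zero_in_cells.
have Hx : 0 < x <= 1 by rewrite lt_def xn0 x0 x1.
have /andP [w1 w2] := beta_upper_windows Hx L.*2.
apply: (union_intervals_mem (a := psum (beta x) L.*2)); last by rewrite ltW.
apply/mapP; exists (psum (beta x) L.*2, ones_upto (beta x) L.*2) => //.
rewrite mem_cat; rewrite (Rmap_value xn0) in Rx.
by case: (value_word_cases Rx) => /(cells_cover Hx) ->; rewrite ?orbT.
Qed.

Lemma fiber_cover_measure y L :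
  (lebesgue_measure (fiber_cover y L) <= (2 * (3 / 4) ^+ L)%:E)%E.
Proof.
apply: le_trans (union_intervals_measure _ (ltW (halfpow_gt0 _))) _.
have -> : (3 / 4 : R) ^+ L = (3 ^ L)%:R * halfpow L.*2.
  elim: L => [|L IH]; first by rewrite expr0 expn0 halfpow0 mulr1.
  by rewrite exprS IH doubleS !halfpowS expnS natrM; field.
rewrite lee_fin mulrA ler_wpM2r ?(ltW (halfpow_gt0 _)) // size_map size_cat.
by rewrite -natrM ler_nat mul2n -addnn leq_add ?size_cells.
Qed.

Lemma fiber_cover_closed y L : closed (fiber_cover y L).
Proof. exact: union_intervals_closed. Qed.

Lemma closure_fiber_null y : lebesgue_measure (closure (fiber y)) = 0%E.
Proof.
apply/eqP; rewrite eq_le measure_ge0 andbT; apply/lee_addgt0Pr => e e0.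
have [|L HL] := @pow_small (3 / 4) (e / 2) _ (divr_gt0 e0 (ltr0n _ 2)); first lra.
have cover : closure (fiber y) `<=` fiber_cover y L.
  exact: closure_sub_closed (@fiber_cover_closed y L) (@fiber_sub_cover y L).
have mcl : measurable (closure (fiber y)).
  by apply: closed_measurable; exact: closed_closure.
have mcov : measurable (fiber_cover y L).
  by apply: closed_measurable; exact: fiber_cover_closed.
have mono : (lebesgue_measure (closure (fiber y)) <= lebesgue_measure (fiber_cover y L))%E.
  by apply: le_measure; rewrite ?inE.
apply: le_trans mono _; apply: le_trans (fiber_cover_measure y L) _.
by rewrite add0e lee_fin; lra.
Qed.

Lemma closure_fiber_compact y : compact (closure (fiber y)).
Proof.
apply: (@subclosed_compact _ _ (`[0, 1]%classic : set R)).
- exact: closed_closure.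
- exact: segment_compact.
- by move=> z /closure_fiber_unit; rewrite /= in_itv.
Qed.

Lemma closure_fiber_perfect y : 0 <= y <= 1 -> perfect_set (closure (fiber y)).
Proof.
move=> y01; split; first exact: closed_closure.
apply/seteqP; split.
  move=> z /subset_limit_point.
  by rewrite -(closure_id _).1 //; exact: closed_closure.
move=> z cz U /nbhs_ballP [e /= e0 Hb]; have e2 : 0 < e / 2 by lra.
have [x [fx zx]] := closure_near cz e2.
have [x1 [x2 [f1 f2 x12 d1 d2]]] := fiber_pair_near y01 fx e2.
have near_z x' : `|x - x'| < e / 2 -> U x'.
  move=> xx'; apply: Hb; rewrite -ball_normE /=.
  have -> : z - x' = (z - x) + (x - x') by rewrite addrA subrK.
  by apply: le_lt_trans (ler_normD _ _) _; lra.
have [z1|z1] := eqVneq x1 z.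
  exists x2; split; [by rewrite -z1 eq_sym | exact: subset_closure | exact: near_z].
by exists x1; split; [exact: z1 | exact: subset_closure | exact: near_z].
Qed.

(* A connected subset of R with two points contains the segment between
   them, which has positive measure: a measurable null set of reals is
   totally disconnected. *)
Lemma null_totally_disconnected (A : set R) :
  measurable A -> lebesgue_measure A = 0%E -> totally_disconnected A.
Proof.
move=> mA A0 x Ax; apply/seteqP; split; last first.
  by move=> _ ->; apply: connected_component_refl.
move=> z Cz; apply: contrapT => zx.
have conn := (connected_intervalP _).1 (@component_connected _ A x).
have sub := @connected_component_sub _ A x.
have Cx := connected_component_refl Ax.
have no_segment (a b : R) : a < b -> connected_component A x a ->
    connected_component A x b -> False.
  move=> ab Ca Cb.
  have sab : (`[a, b]%classic : set R) `<=` A.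
    by move=> t; rewrite /= in_itv /= => tab; apply: sub; exact: conn a b Ca Cb t tab.
  have : (lebesgue_measure (`[a, b]%classic : set R) <= lebesgue_measure A)%E.
    by apply: le_measure; rewrite ?inE //; exact: measurable_itv.
  rewrite A0; change ((lebesgue_measure ([set` `[a, b]%R] : set R) <= 0)%E -> False).
  by rewrite lebesgue_measure_itv /= lte_fin ab lee_fin subr_le0 leNgt ab.
have /lt_total /orP [H|H] : z != x by apply/eqP.
  exact: no_segment H Cz Cx.
exact: no_segment H Cx Cz.
Qed.

End Fibers.

Theorem proposition5p3 (R : realType) (y : R) :
  0 <= y <= 1 ->
  [/\ cantor_set (closure (fiber y)),
      (@lebesgue_measure R (closure (fiber y)) = 0)%E
    & closure (fiber y) `\` fiber y `<=` dyadic].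
Proof.
move=> y01; have null := closure_fiber_null y.
have mcl : measurable (closure (fiber y)) by apply: closed_measurable; exact: closed_closure.
split=> //.
- split.
  + by have [x [fx _]] := fiber_pos y01; exists x; exact: subset_closure.
  + exact: closure_fiber_compact.
  + exact: closure_fiber_perfect.
  + exact: null_totally_disconnected.
- move=> z [cz nfz]; apply: contrapT => nd; apply: nfz.
  exact: closure_nondyadic.
Qed.
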